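(* For $v\in S_n$ and $x\in\mathfrak{ut}_n$, $$\chi^v(x)=\prod_{\substack{1\le i<j\le n\\ j-i\le\iota_i(v)}}\mathbf 1(x_{ij})\prod_{\substack{1\le i<j\le n\\ j-i=\iota_i(v)+1}}(\mathrm{reg}-\mathbf 1)(x_{ij})\prod_{\substack{1\le i<j\le n\\ j-i>\iota_i(v)+1}}\mathrm{reg}(x_{ij}),$$ where for $t\in\mathbb{F}_q$, $\mathbf 1(t)=1$ and $\mathrm{reg}(t)=q$ if $t=0$, $\mathrm{reg}(t)=0$ if $t\ne0$.
   Context: Let $q$ be a prime power and $\mathfrak{ut}_n$ the additive group of strictly upper triangular $n\times n$ matrices over $\mathbb{F}_q$. For $w\in S_n$ (one-line notation), $\iota_k(w)=\#\{i<w^{-1}(k):w(i)>k\}$ and $\mathfrak{ut}_w=\{x\in\mathfrak{ut}_n:x_{ij}\ne0\Rightarrow0<j-i\le\iota_i(w)\}$; these subgroups form a lattice closed under intersection and sum. In the associated normal lattice supercharacter theory, the supercharacter $\chi^w$ is $\sum_\psi\psi(1)\psi$, summed over irreducible characters $\psi$ of $\mathfrak{ut}_n$ such that $\mathfrak{ut}_w$ is the largest member of the lattice contained in $\ker\psi$. The functions $\mathbf 1$ and $\mathrm{reg}$ are the trivial and regular characters of the additive group $\mathbb{F}_q^+$. *)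

From HB Require Import structures.
From mathcomp Require Import all_boot all_order all_algebra all_fingroup all_field all_character.
Set Implicit Arguments. Unset Strict Implicit. Unset Printing Implicit Defensive.
Import GRing.Theory Num.Theory.
Local Open Scope ring_scope.

Section Defs.
Variables (F : finFieldType) (n : nat).

(* 'M[F]_n is a finZmodType, hence (finalg) a finGroupType whose group law is
   matrix addition: this is the additive group of n x n matrices over F.
   Indices are 0-based ('I_n); all conditions only involve j - i. *)

Definition ut_set : {set 'M[F]_n} :=
  [set x : 'M[F]_n | [forall i : 'I_n, forall j : 'I_n, (x i j != 0) ==> (i < j)%N]].

Lemma ut_group_set : group_set ut_set.
Proof.
apply/andP; split.
  by rewrite inE; apply/forallP=> i; apply/forallP=> j; rewrite mxE eqxx.
apply/subsetP=> z /imset2P[x y]; rewrite !inE => /forallP Hx /forallP Hy ->.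
apply/forallP=> i; apply/forallP=> j; apply/implyP.
have -> : (x * y)%g = x + y by [].
rewrite mxE.
have /implyP hx := forallP (Hx i) j; have /implyP hy := forallP (Hy i) j.
case: (x i j =P 0) => [-> | /eqP nx _]; last exact: hx.
rewrite add0r; exact: hy.
Qed.

Canonical UT : {group 'M[F]_n} := Group ut_group_set.

Definition iota_w (w : 'S_n) (k : 'I_n) : nat :=
  #|[set i : 'I_n | (i < (w^-1)%g k)%N && (k < w i)%N]|.

Definition ut_w (w : 'S_n) : {set 'M[F]_n} :=
  [set x : 'M[F]_n | [forall i : 'I_n, forall j : 'I_n,
     (x i j != 0) ==> ((i < j)%N && (j - i <= iota_w w i)%N)]].

Definition largest_in (w : 'S_n) (A : {set 'M[F]_n}) : bool :=
  (ut_w w \subset A) && [forall u : 'S_n, (ut_w u \subset A) ==> (ut_w u \subset ut_w w)].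

Definition superchar (w : 'S_n) (x : 'M[F]_n) : algC :=
  \sum_(i : Iirr UT | largest_in w (cfker 'chi[UT]_i)) 'chi[UT]_i 1%g * 'chi[UT]_i x.

End Defs.

Definition one_char (F : finFieldType) (t : F) : algC := 1.
Definition reg_char (F : finFieldType) (t : F) : algC :=
  if t == 0 then (#|F|)%:R else 0.

From HB Require Import structures.
From mathcomp Require Import all_boot all_order all_algebra all_fingroup all_field all_character.
From mathcomp Require Import zify.
Set Implicit Arguments. Unset Strict Implicit. Unset Printing Implicit Defensive.
Import GRing.Theory Num.Theory.

(** Fix a nontrivial linear character [th] of F^+.  Since ut_n is abelian, its
    irreducible characters are the linear characters [x |-> th (sum_ij l_ij x_ij)],
    one for each l in ut_n.  Such a character contains ut_u in its kernel iff l
    vanishes on the support of ut_u; and ut_v is the largest lattice member in the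
    kernel iff moreover l_ij <> 0 whenever j - i = iota_i(v) + 1.  Indeed, if
    l_ij = 0 there, swapping in v the value i with the first larger value to its
    right yields u with iota_i(u) = iota_i(v) + 1 and all other iota_c unchanged,
    so ut_v < ut_u inside the kernel.  The sum over these admissible l factors
    entrywise, and each factor is a character sum over F equal to 1, reg - 1 or reg. *)

Lemma card_agree_off2 (T : finType) (A B : {set T}) (k m : T) : k != m ->
    (forall y, y != k -> y != m -> (y \in A) = (y \in B)) ->
  #|A| + ((k \in B) + (m \in B)) = #|B| + ((k \in A) + (m \in A)).
Proof.
move=> km eqAB.
rewrite (cardsD1 k A) (cardsD1 k B) (cardsD1 m (A :\ k)) (cardsD1 m (B :\ k)).
have -> : A :\ k :\ m = B :\ k :\ m.
  apply/setP => y; rewrite !inE.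
  by case: (eqVneq y m) => //= ym; case: (eqVneq y k) => //= yk; rewrite eqAB.
rewrite !inE (eq_sym m k) km /=; lia.
Qed.

Lemma card_ord_gt m k : #|[set y : 'I_m | (k < y)%N]| = m - k.+1.
Proof.
rewrite -sum1_card big_mkcond /=; under eq_bigr do rewrite inE.
elim: m => [|m IHm]; first by rewrite big_ord0.
by rewrite big_ord_recr /= IHm; case: ltnP => /=; lia.
Qed.

Section Inversions.
Variable n : nat.
Implicit Types (v w : 'S_n) (c k m y : 'I_n).

Definition iota_set w c : {set 'I_n} :=
  [set y | ((w^-1)%g y < (w^-1)%g c)%N && (c < y)%N].

Lemma iota_wE w c : iota_w w c = #|iota_set w c|.
Proof.
rewrite /iota_w -(card_preimset _ (@perm_inj _ w)); apply: eq_card => i.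
by rewrite !inE permK.
Qed.

Lemma exists_later_larger v k : ((k + iota_w v k).+1 < n)%N ->
  exists p : 'I_n, ((v^-1)%g k < p)%N && (k < v p)%N.
Proof.
move=> room; apply/existsP; apply: contraTT room => /existsPn none.
rewrite -leqNgt iota_wE.
have -> : iota_set v k = [set y : 'I_n | (k < y)%N].
  apply/setP => y; rewrite !inE; case: (ltnP k y) => ky; rewrite ?andbT ?andbF //.
  case: (ltngtP ((v^-1)%g y) ((v^-1)%g k)) => // [later | same].
    by have := none ((v^-1)%g y); rewrite later permKV ky.
  by move: ky; rewrite (perm_inj (val_inj same)) ltnn.
by rewrite card_ord_gt; have := ltn_ord k; lia.
Qed.

Section SwapWithNextLarger.
Variables (v : 'S_n) (k m : 'I_n).
Local Notation pos := (v^-1)%g.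
Hypotheses (lt_km : (k < m)%N) (lt_pos_km : (pos k < pos m)%N).
Hypothesis no_larger_between : forall y, (pos k < pos y)%N -> (pos y < pos m)%N -> (y <= k)%N.

Lemma pos_lt_km y : y != k -> (k < y)%N -> (pos y < pos k)%N = (pos y < pos m)%N.
Proof.
move=> yk ky; apply/idP/idP => [lt_yk | lt_ym]; first exact: ltn_trans lt_yk lt_pos_km.
rewrite ltnNge leq_eqVlt; apply/negP => /orP[/eqP same | lt_ky].
  by move: yk; rewrite (perm_inj (val_inj same)) eqxx.
by have := no_larger_between lt_ky lt_ym; rewrite leqNgt ky.
Qed.

Lemma pos_gt_km c : c != m -> (k < c)%N -> (pos k < pos c)%N = (pos m < pos c)%N.
Proof.
move=> cm kc; apply/idP/idP => [lt_kc | lt_mc]; last exact: ltn_trans lt_pos_km lt_mc.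
rewrite ltnNge leq_eqVlt; apply/negP => /orP[/eqP same | lt_cm].
  by move: cm; rewrite (perm_inj (val_inj same)) eqxx.
by have := no_larger_between lt_kc lt_cm; rewrite leqNgt kc.
Qed.

Local Notation u := (v * tperm k m)%g.

Lemma tperm_fix y : y != k -> y != m -> tperm k m y = y.
Proof. by move=> yk ym; apply: tpermD; rewrite eq_sym. Qed.

Lemma ltn_mk : (m < k)%N = false.
Proof. by rewrite ltnNge ltnW. Qed.

Lemma ltn_pos_mk : (pos m < pos k)%N = false.
Proof. by rewrite ltnNge ltnW. Qed.

Lemma pos_swapE y : (u^-1)%g y = pos (tperm k m y).
Proof. by rewrite invMg tpermV permM. Qed.

Lemma k_neq_m : k != m.
Proof. by rewrite neq_ltn lt_km. Qed.

Lemma iota_w_swap_pivot : iota_w u k = (iota_w v k).+1.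
Proof.
rewrite !iota_wE.
have := card_agree_off2 (A := iota_set u k) (B := iota_set v k) k_neq_m.
rewrite !inE !pos_swapE tpermL tpermR !ltnn lt_pos_km lt_km ltn_pos_mk /=.
suff agree y : y != k -> y != m -> (y \in iota_set u k) = (y \in iota_set v k).
  by move/(_ agree); lia.
move=> yk ym; rewrite !inE !pos_swapE tpermL tperm_fix //.
by case: (ltnP k y); rewrite ?andbF ?andbT // => /(pos_lt_km yk) ->.
Qed.

Lemma iota_w_swap_other c : c != k -> iota_w u c = iota_w v c.
Proof.
move=> ck; rewrite !iota_wE.
have := card_agree_off2 (A := iota_set u c) (B := iota_set v c) k_neq_m.
case: (eqVneq c m) => [-> | cm].
  rewrite !inE !pos_swapE tpermL tpermR !ltnn ltn_pos_mk ltn_mk /= andbF.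
  suff agree y : y != k -> y != m -> (y \in iota_set u m) = (y \in iota_set v m).
    by move/(_ agree); lia.
  move=> yk ym; rewrite !inE !pos_swapE tpermR tperm_fix //.
  case: (ltnP m y); rewrite ?andbF ?andbT // => lt_my.
  by rewrite pos_lt_km // (ltn_trans lt_km lt_my).
rewrite !inE !pos_swapE tpermL tpermR tperm_fix //.
have -> : ((pos m < pos c)%N && (c < k)%N) + ((pos k < pos c)%N && (c < m)%N)
        = ((pos k < pos c)%N && (c < k)%N) + ((pos m < pos c)%N && (c < m)%N).
  case: (ltnP c k) => [lt_ck | le_kc]; first by rewrite (ltn_trans lt_ck lt_km) addnC.
  have lt_kc : (k < c)%N by rewrite ltn_neqAle le_kc andbT eq_sym; exact: ck.
  by rewrite pos_gt_km.
suff agree y : y != k -> y != m -> (y \in iota_set u c) = (y \in iota_set v c).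
  by move/(_ agree)/addIn.
by move=> yk ym; rewrite !inE !pos_swapE !tperm_fix.
Qed.

End SwapWithNextLarger.

Lemma exists_iota_w_succ v k : ((k + iota_w v k).+1 < n)%N ->
  exists u : 'S_n, iota_w u k = (iota_w v k).+1 /\
                   forall c, c != k -> iota_w u c = iota_w v c.
Proof.
move=> /exists_later_larger[p0 later_p0].
pose later_larger (p : 'I_n) := ((v^-1)%g k < p)%N && (k < v p)%N.
case: (@arg_minnP _ p0 later_larger val later_p0) => b /andP[lt_kb lt_kvb] bmin.
have no_larger_between y : ((v^-1)%g k < (v^-1)%g y)%N -> ((v^-1)%g y < (v^-1)%g (v b))%N ->
    (y <= k)%N.
  rewrite permK => lt_ky lt_yb; rewrite leqNgt; apply/negP => lt_k_y.
  have := bmin ((v^-1)%g y); rewrite /later_larger lt_ky permKV lt_k_y leqNgt lt_yb.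
  by move/(_ isT)/negP.
have lt_Pkb : ((v^-1)%g k < (v^-1)%g (v b))%N by rewrite permK.
exists (v * tperm k (v b))%g; split; first exact: iota_w_swap_pivot lt_kvb lt_Pkb no_larger_between.
exact: iota_w_swap_other lt_kvb lt_Pkb no_larger_between.
Qed.

End Inversions.

Local Open Scope ring_scope.

Lemma sum_mx_prod (T : finType) (R : comPzSemiRingType) m n
    (P : 'I_m -> 'I_n -> pred T) (f : 'I_m -> 'I_n -> T -> R) :
  \sum_(A : 'M[T]_(m, n) | [forall i, forall j, P i j (A i j)]) \prod_i \prod_j f i j (A i j)
  = \prod_i \prod_j \sum_(t | P i j t) f i j t.
Proof.
rewrite pair_big bigA_distr_big_dep /=.
have Matrix_bij : bijective (@Matrix T m n) by exists (@mx_val T m n) => [g | []].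
rewrite (reindex _ (onW_bij _ Matrix_bij)); apply: eq_big => [g | g _].
  apply/forallP/familyP => [Pg [i j] | Pg i]; first exact: forallP (Pg i) j.
  by apply/forallP => j; exact: Pg (i, j).
by rewrite pair_big; apply: eq_big => // -[i j].
Qed.

Lemma sum_irr_eq0 (gT : finGroupType) (G : {group gT}) (i : Iirr G) :
  i != 0 -> \sum_(x in G) 'chi[G]_i x = 0.
Proof.
move=> nz_i; have /eqP := cfdot_irr i 0; rewrite (negPf nz_i) cfdotE irr0.
rewrite mulf_eq0 invr_eq0 (negPf (neq0CG G)) /= => /eqP sum0; rewrite -[RHS]sum0.
by apply: eq_bigr => x Gx; rewrite cfun1E Gx conjC1 mulr1.
Qed.

Lemma exists_lin_char_sum0 (F : finFieldType) :
  exists2 th : 'CF([set: F]), th \is a linear_char & \sum_(t : F) th t = 0.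
Proof.
have abelF : abelian [set: F] by apply/centsP => x _ y _; apply: addrC.
have lt1F : (1 < Nirr [set: F])%N.
  rewrite -[Nirr _]card_ord card_Iirr_abelian // cardsT.
  by apply/card_gt1P; exists 0, 1; rewrite eq_sym oner_eq0.
pose i : Iirr [set: F] := inord 1.
have nz_i : i != 0 by rewrite -(inj_eq val_inj) /= inordK.
exists 'chi_i; first exact: char_abelianP abelF i.
by rewrite -[RHS](sum_irr_eq0 nz_i); apply: eq_bigl => t; rewrite in_setT.
Qed.

Section PatternSets.
Variables (F : finFieldType) (n : nat).
Implicit Types (P Q : 'I_n -> 'I_n -> bool) (x : 'M[F]_n) (i j : 'I_n) (w : 'S_n).

Definition pattern_set P : {set 'M[F]_n} :=
  [set x : 'M[F]_n | [forall i, forall j, (x i j != 0) ==> P i j]].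

Lemma pattern_setP P x : reflect (forall i j, x i j != 0 -> P i j) (x \in pattern_set P).
Proof.
rewrite inE; apply: (iffP forallP) => [Px i j | Px i]; first exact: implyP (forallP (Px i) j).
by apply/forallP => j; apply/implyP/Px.
Qed.

Lemma pattern_set_entry P x i j : x \in pattern_set P -> ~~ P i j -> x i j = 0.
Proof. by move=> /pattern_setP Px nPij; apply/eqP; exact: contraNT (Px i j) nPij. Qed.

Lemma pattern_set_subset P Q :
  (forall i j, P i j -> Q i j) -> pattern_set P \subset pattern_set Q.
Proof. by move=> PQ; apply/subsetP => x /pattern_setP Px; apply/pattern_setP => i j /Px/PQ. Qed.

Lemma scale_delta_pattern_set P c i j : P i j -> c *: delta_mx i j \in pattern_set P.
Proof.
move=> Pij; apply/pattern_setP => a b; rewrite !mxE.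
by have [-> | ai] := eqVneq a i; have [-> | bj] := eqVneq b j; rewrite ?mulr0 ?eqxx.
Qed.

Lemma delta_pattern_setE P i j : (delta_mx i j \in pattern_set P) = P i j.
Proof.
apply/idP/idP => [/pattern_setP/(_ i j) | Pij]; first by rewrite mxE !eqxx oner_eq0; apply.
by rewrite -[delta_mx i j]scale1r scale_delta_pattern_set.
Qed.

Definition ut_w_supp w i j := (i < j)%N && (j - i <= iota_w w i)%N.

Lemma ut_wE w : ut_w F w = pattern_set (ut_w_supp w).
Proof. by []. Qed.

End PatternSets.

Arguments pattern_set {F n} P.

Definition ut_w_border n (w : 'S_n) (i j : 'I_n) := (i < j)%N && (j - i == (iota_w w i).+1)%N.
Definition ut_w_far n (w : 'S_n) (i j : 'I_n) := (i < j)%N && ((iota_w w i).+1 < j - i)%N.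

Section DotCharacters.
Variables (F : finFieldType) (th : 'CF([set: F])).
Hypotheses (th_lin : th \is a linear_char) (th_sum0 : \sum_(t : F) th t = 0).

Lemma thD a b : th (a + b) = th a * th b.
Proof. exact: (lin_charM th_lin (in_setT a) (in_setT b)). Qed.

Lemma th0 : th 0 = 1.
Proof. exact: lin_char1 th_lin. Qed.

Lemma thB a b : th (a - b) = th a / th b.
Proof. by rewrite thD; congr (_ * _); exact: (lin_charV th_lin (in_setT b)). Qed.

Lemma th_nontrivial : exists t, th t != 1.
Proof.
apply/existsP; rewrite -negb_forall; apply/forallP => th1.
move: th_sum0; rewrite (eq_bigr (fun _ => 1)) => [|t _]; last exact/eqP/th1.
by rewrite sumr_const => /eqP; rewrite pnatr_eq0 => /eqP/card0_eq/(_ 0); rewrite !inE.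
Qed.

Lemma sum_th_mul c : \sum_(t : F) th (t * c) = reg_char c.
Proof.
rewrite /reg_char; case: eqP => [-> | /eqP nz_c].
  by rewrite (eq_bigr (fun _ => 1)) ?sumr_const // => t _; rewrite mulr0 th0.
by rewrite -[RHS]th_sum0 [RHS](reindex_inj (mulIf nz_c)).
Qed.

Variable n : nat.
Local Notation UTn := (UT F n).
Implicit Types (l x : 'M[F]_n) (i j : 'I_n) (P : 'I_n -> 'I_n -> bool).

Lemma abelian_UT : abelian UTn.
Proof. by apply/centsP => x _ y _; apply: addrC. Qed.

Definition dotmx l x : F := \sum_i \sum_j l i j * x i j.

Lemma dotmxDr l : {morph dotmx l : x y / x + y}.
Proof.
move=> x y; rewrite /dotmx -big_split; apply: eq_bigr => i _.
by rewrite -big_split; apply: eq_bigr => j _; rewrite mxE mulrDr.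
Qed.

Lemma dotmxBl x : {morph dotmx^~ x : l1 l2 / l1 - l2}.
Proof.
move=> l1 l2; rewrite /dotmx -sumrB; apply: eq_bigr => i _.
by rewrite -sumrB; apply: eq_bigr => j _; rewrite !mxE mulrBl.
Qed.

Lemma dotmx_scale_delta l c i j : dotmx l (c *: delta_mx i j) = l i j * c.
Proof.
rewrite /dotmx (bigD1 i) //= [X in _ + X]big1 => [|k /negPf ki]; last first.
  by apply: big1 => k' _; rewrite !mxE ki /= mulr0n !mulr0.
rewrite addr0 (bigD1 j) //= [X in _ + X]big1 => [|k /negPf kj]; last first.
  by rewrite !mxE eqxx kj /= mulr0n !mulr0.
by rewrite !mxE !eqxx mulr1 !addr0.
Qed.

Lemma dotmx_pattern_set P l x :
  (forall i j, P i j -> l i j = 0) -> x \in pattern_set P -> dotmx l x = 0.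
Proof.
move=> l0 /pattern_setP Px; apply: big1 => i _; apply: big1 => j _.
by have [-> | /Px/l0 ->] := eqVneq (x i j) 0; rewrite ?mulr0 ?mul0r.
Qed.

Lemma dotmxM l : {in UTn &, {morph dotmx l : x y / (x * y)%g >-> (x * y)%g}}.
Proof. by move=> x y _ _; apply: dotmxDr. Qed.

Canonical dotmx_morphism l : {morphism UTn >-> F} := Morphism (dotmxM l).

Definition dot_char l : 'CF(UTn) := cfMorph ('Res[dotmx_morphism l @* UTn] th).

Lemma dot_charE l x : x \in UTn -> dot_char l x = th (dotmx l x).
Proof.
by move=> Ux; rewrite cfMorphE // cfResE ?subsetT ?mem_morphim.
Qed.

Lemma dot_char_lin l : dot_char l \is a linear_char.
Proof. exact/cfMorph_lin_char/cfRes_lin_char. Qed.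

Lemma dot_char_prod l x : x \in UTn -> dot_char l x = \prod_i \prod_j th (l i j * x i j).
Proof.
move=> Ux; rewrite dot_charE // (big_morph th thD th0).
by under eq_bigr do rewrite (big_morph th thD th0).
Qed.

Lemma cfker_dot_char l : cfker (dot_char l) = [set x in UTn | th (dotmx l x) == 1].
Proof.
rewrite cfkerEchar ?lin_charW ?dot_char_lin // lin_char1 ?dot_char_lin //.
by apply: eq_finset => x; case Ux: (x \in UTn); rewrite /= ?dot_charE.
Qed.

Lemma pattern_set_sub_cfker P l : (forall i j, P i j -> i < j)%N ->
  pattern_set P \subset cfker (dot_char l) <-> forall i j, P i j -> l i j = 0.
Proof.
move=> P_ut; rewrite cfker_dot_char; split => [sPker i j Pij | l0]; last first.
  apply/subsetP => x Px; rewrite inE (dotmx_pattern_set l0 Px) th0 eqxx andbT.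
  by apply: subsetP Px; apply: pattern_set_subset.
apply/eqP/negP => /negP nz_l; have [t th_t] := th_nontrivial.
have := subsetP sPker _ (scale_delta_pattern_set (t / l i j) Pij).
by rewrite inE dotmx_scale_delta mulrCA divff // mulr1 (negPf th_t) andbF.
Qed.

Lemma dot_char_inj : {in UTn &, injective dot_char}.
Proof.
move=> l1 l2 U1 U2 eq12; apply/matrixP => i j; apply/eqP; rewrite -subr_eq0.
have [lt_ij | le_ji] := ltnP i j; last first.
  have nlt_ij : ~~ (i < j)%N by rewrite -leqNgt.
  by rewrite (pattern_set_entry U1 nlt_ij) (pattern_set_entry U2 nlt_ij) subrr.
have sUker : pattern_set (fun i j : 'I_n => (i < j)%N) \subset cfker (dot_char (l1 - l2)).
  apply/subsetP => x Ux; rewrite cfker_dot_char inE Ux dotmxBl thB -!dot_charE // eq12.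
  by rewrite divff ?eqxx // (lin_char_neq0 (dot_char_lin l2) Ux).
by have /(_ i j lt_ij) := (pattern_set_sub_cfker _ (fun _ _ => id)).1 sUker; rewrite !mxE => ->.
Qed.

Lemma sum_Iirr_UT (R : nmodType) (G : 'CF(UTn) -> R) :
  \sum_(k : Iirr UTn) G 'chi_k = \sum_(l in UTn) G (dot_char l).
Proof.
pose h l := cfIirr (dot_char l).
have hE l : 'chi_(h l) = dot_char l := cfIirrE (lin_char_irr (dot_char_lin l)).
have h_inj : {in UTn &, injective h}.
  by move=> l1 l2 U1 U2 /(congr1 (fun k => 'chi_k)); rewrite !hE; apply: dot_char_inj.
have h_onto : h @: UTn = setT.
  apply/eqP; rewrite eqEcard subsetT cardsT card_in_imset //.
  by rewrite card_Iirr_abelian ?abelian_UT //= leqnn.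
rewrite [RHS](eq_bigr (fun l => G 'chi_(h l))) => [|l _]; last by rewrite hE.
rewrite -(big_imset (fun k => G 'chi_k) h_inj) h_onto.
by apply: eq_bigl => k; rewrite in_setT.
Qed.

Variable v : 'S_n.

Lemma largest_in_cfker_dot_char l :
  largest_in v (cfker (dot_char l)) <->
  (forall i j, ut_w_supp v i j -> l i j = 0) /\ (forall i j, ut_w_border v i j -> l i j != 0).
Proof.
have ut_w_sub u : ut_w F u \subset cfker (dot_char l) <-> forall i j, ut_w_supp u i j -> l i j = 0.
  by apply: pattern_set_sub_cfker => // i j /andP[].
split.
  case/andP => /ut_w_sub l0 /forallP maxv; split => // i j /andP[lt_ij /eqP border].
  apply/eqP => lij0.
  have room : ((i + iota_w v i).+1 < n)%N by have := ltn_ord j; lia.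
  have [u [u_i u_other]] := exists_iota_w_succ room.
  have l0u a b : ut_w_supp u a b -> l a b = 0.
    case/andP; have [-> | a_i] := eqVneq a i => lt_ab; last first.
      by rewrite u_other // => le; apply: l0; rewrite /ut_w_supp lt_ab le.
    rewrite u_i leq_eqVlt ltnS => /orP[/eqP e | le]; last by apply: l0; rewrite /ut_w_supp lt_ab le.
    by have -> : b = j by apply: ord_inj; lia.
  have := subsetP (implyP (maxv u) ((ut_w_sub u).2 l0u)) (delta_mx i j).
  by rewrite !ut_wE !delta_pattern_setE /ut_w_supp lt_ij u_i border ltnn leqnn => /(_ isT).
case=> l0 border_nz; apply/andP; split; first exact/ut_w_sub.
apply/forallP => u; apply/implyP => /ut_w_sub l0u.
rewrite !ut_wE; apply: pattern_set_subset => a b /andP[lt_ab le_u].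
rewrite /ut_w_supp lt_ab leqNgt; apply/negP => lt_v.
have lt_jn : (a + (iota_w v a).+1 < n)%N by have := ltn_ord b; lia.
have border : ut_w_border v a (Ordinal lt_jn) by apply/andP; split => /=; lia.
by have := border_nz _ _ border; rewrite l0u ?eqxx //; apply/andP; split => /=; lia.
Qed.

Definition admissible i j (t : F) :=
  if ut_w_border v i j then t != 0 else ut_w_far v i j || (t == 0).

Lemma admissibleE l :
  (l \in UTn) && largest_in v (cfker (dot_char l)) = [forall i, forall j, admissible i j (l i j)].
Proof.
apply/andP/forallP => [[Ul /largest_in_cfker_dot_char[l0 nz]] i | adm].
  apply/forallP => j; rewrite /admissible; case: ifP => [/nz // | not_border].
  have [lt_ij | le_ji] := ltnP i j; last by rewrite (pattern_set_entry Ul) ?eqxx ?orbT // -leqNgt.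
  case far: (ut_w_far v i j) => //=; apply/eqP/l0.
  by move: not_border far; rewrite /ut_w_border /ut_w_far /ut_w_supp lt_ij /=; lia.
have adm_ij i j : admissible i j (l i j) := forallP (adm i) j.
have Ul : l \in UTn.
  apply/pattern_setP => i j nz; have := adm_ij i j; rewrite /admissible (negPf nz) orbF.
  by case: ifP => [/andP[] | _ /andP[]].
split => //; apply/largest_in_cfker_dot_char; split => i j; have := adm_ij i j; rewrite /admissible.
  move=> + supp.
  have -> : ut_w_border v i j = false by move: supp; rewrite /ut_w_border /ut_w_supp; lia.
  have -> : ut_w_far v i j = false by move: supp; rewrite /ut_w_far /ut_w_supp; lia.
  by move/eqP.
by move=> + border; rewrite border.
Qed.

Lemma sum_admissible i j c :
  \sum_(t | admissible i j t) th (t * c)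
  = (if ut_w_border v i j then reg_char c - one_char c else 1)
    * (if ut_w_far v i j then reg_char c else 1).
Proof.
rewrite /admissible /one_char; case border: (ut_w_border v i j).
  have -> : ut_w_far v i j = false by move: border; rewrite /ut_w_border /ut_w_far; lia.
  have := sum_th_mul c; rewrite (bigD1 0) //= mul0r th0 => <-.
  by rewrite mulr1 addrC addrK.
case: (ut_w_far v i j); first by rewrite mul1r; exact: sum_th_mul.
by rewrite mulr1 big_pred1_eq mul0r th0.
Qed.

Lemma superchar_prod x : x \in UTn ->
  superchar v x = \prod_i \prod_j
    ((if ut_w_border v i j then reg_char (x i j) - one_char (x i j) else 1)
     * (if ut_w_far v i j then reg_char (x i j) else 1)).
Proof.
move=> Ux; rewrite /superchar big_mkcond /=.
rewrite (sum_Iirr_UT (fun phi => if largest_in v (cfker phi) then phi 1%g * phi x else 0)).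
rewrite -big_mkcondr /= (eq_bigl _ _ admissibleE).
under eq_bigr => l _ do rewrite lin_char1 ?dot_char_lin // mul1r dot_char_prod //.
rewrite (sum_mx_prod admissible (fun i j t => th (t * x i j))).
by apply: eq_bigr => i _; apply: eq_bigr => j _; exact: sum_admissible.
Qed.

End DotCharacters.

Unset Implicit Arguments.

Theorem corollary3p3 (F : finFieldType) (n : nat) (v : 'S_n) (x : 'M[F]_n) :
  x \in ut_set F n ->
  superchar v x =
    (\prod_(i < n) \prod_(j < n | (i < j)%N && (j - i <= iota_w v i)%N)
        one_char (x i j))
  * (\prod_(i < n) \prod_(j < n | (i < j)%N && (j - i == (iota_w v i).+1)%N)
        (reg_char (x i j) - one_char (x i j)))
  * (\prod_(i < n) \prod_(j < n | (i < j)%N && ((iota_w v i).+1 < j - i)%N)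
        reg_char (x i j)).
Proof.
move=> Ux; have [th th_lin th_sum0] := exists_lin_char_sum0 F.
rewrite (superchar_prod th_lin th_sum0 v Ux).
rewrite [X in X * _ * _]big1 ?mul1r => [|i _]; last exact: big1.
rewrite -big_split; apply: eq_bigr => i _.
by rewrite [X in _ = X * _]big_mkcond [X in _ = _ * X]big_mkcond -big_split.
Qed.
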